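(* Let $F'_Y\le F_Y$ and $F_Z$ be distribution functions, $K=F_Y+F_Z-F_YF_Z$, $K'=F'_Y+F_Z-F'_YF_Z$, and let $\chi'$ and $\chi$ be the canonical maxmin generators of $(F'_Y,F_Z)$ and $(F_Y,F_Z)$ respectively. Then $\chi'\le\chi$ pointwise on $[0,1]$.
   Context: A distribution function is a non-decreasing map $F:\mathbb R\to[0,1]$ (no right-continuity assumed) with limits $0$ at $-\infty$ and $1$ at $+\infty$; $f(y\pm)$ are one-sided limits. The canonical maxmin generator $\chi$ of $(F_Y,F_Z)$, with $K=F_Y+F_Z-F_YF_Z$: $\chi(0)=0$, $\chi(1)=1$, and for $w\in(0,1)$ choose $y_0$ with $K(y_0-)\le w\le K(y_0+)$, let $w_-=K(y_0-)$, $w_l=F_Y(y_0-)+F_Z(y_0)-F_Y(y_0-)F_Z(y_0)$, $w_u=F_Y(y_0+)+F_Z(y_0)-F_Y(y_0+)F_Z(y_0)$, $w_+=K(y_0+)$, and $\chi(w)=F_Y(y_0-)$ on $[w_-,w_l]$, $\chi(w)=\frac{w-F_Z(y_0)}{1-F_Z(y_0)}$ on $[w_l,w_u]$, $\chi(w)=F_Y(y_0+)$ on $[w_u,w_+]$. *)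

From HB Require Import structures.
From mathcomp Require Import all_boot all_order all_algebra.
From mathcomp Require Import all_classical all_reals all_analysis.
Set Implicit Arguments. Unset Strict Implicit. Unset Printing Implicit Defensive.
Import Order.TTheory GRing.Theory Num.Theory.
Import numFieldNormedType.Exports.
Local Open Scope ring_scope.
Local Open Scope classical_set_scope.

(* Distribution function: non-decreasing, values in [0,1], limits 0 at -oo
   and 1 at +oo.  No right-continuity assumed. *)
Definition distribution_function (R : realType) (F : R -> R) : Prop :=
  [/\ {homo F : x y / x <= y},
      (forall x, 0 <= F x <= 1),
      (F x @[x --> -oo] --> (0:R))%classic &
      (F x @[x --> +oo] --> (1:R))%classic].

Definition lim_left (R : realType) (f : R -> R) (y : R) : R :=
  lim (f x @[x --> at_left y]).
Definition lim_right (R : realType) (f : R -> R) (y : R) : R :=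
  lim (f x @[x --> at_right y]).

Definition Kfun (R : realType) (FY FZ : R -> R) : R -> R :=
  fun y => FY y + FZ y - FY y * FZ y.

Definition maxmin_gen (R : realType) (FY FZ : R -> R) (w : R) : R :=
  if w == 0 then 0 else if w == 1 then 1 else
  let K := Kfun FY FZ in
  let y0 := get [set y | lim_left K y <= w <= lim_right K y] in
  let wl := lim_left FY y0 + FZ y0 - lim_left FY y0 * FZ y0 in
  let wu := lim_right FY y0 + FZ y0 - lim_right FY y0 * FZ y0 in
  if w <= wl then lim_left FY y0
  else if w <= wu then (w - FZ y0) / (1 - FZ y0)
  else lim_right FY y0.

(* With y0 and y0' the points chosen for K and K', the generator on the piece
   of y0 satisfies F_Y(y0-) <= chi(w) <= F_Y(y0+) and, since
   1 - K = (1 - F_Y)(1 - F_Z), also 1 - w = (1 - chi(w))(1 - h) for some h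
   between F_Z(y0-) and F_Z(y0+).  If y0' < y0 the first bounds give
   chi'(w) <= F_Y(y0'+) <= F_Y(y0-) <= chi(w).  If y0 < y0' then
   h <= F_Z(y0+) <= F_Z(y0'-) <= h', and the two factorisations of 1 - w force
   1 - chi'(w) >= 1 - chi(w).  If y0 = y0' the three-piece formula is monotone
   in its endpoints F_Y(y0-) and F_Y(y0+). *)
From HB Require Import structures.
From mathcomp Require Import all_boot all_order all_algebra.
From mathcomp Require Import all_classical all_reals all_analysis.
From mathcomp Require Import ring lra.
Set Implicit Arguments. Unset Strict Implicit. Unset Printing Implicit Defensive.
Import Order.TTheory GRing.Theory Num.Theory.
Import numFieldNormedType.Exports.
Local Open Scope ring_scope.
Local Open Scope classical_set_scope.

Section NondecreasingOneSidedLimits.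
Variables (R : realType) (f : R -> R).
Hypothesis f_nd : {homo f : x y / x <= y}.

Lemma cvg_at_left_homo a : cvg (f x @[x --> at_left a]).
Proof.
apply: nondecreasing_at_left_is_cvgr; first by near=> x => u v _ _; exact: f_nd.
near=> x; exists (f a) => _ [s + <-]; rewrite /= in_itv/= => /andP[_ /ltW].
exact: f_nd.
Unshelve. all: by end_near. Qed.

Lemma cvg_at_right_homo a : cvg (f x @[x --> at_right a]).
Proof.
apply: nondecreasing_at_right_is_cvgr; first by near=> x => u v _ _; exact: f_nd.
near=> x; exists (f a) => _ [s + <-]; rewrite /= in_itv/= => /andP[/ltW + _].
exact: f_nd.
Unshelve. all: by end_near. Qed.

Lemma lim_left_le_ub a c : (forall x, x < a -> f x <= c) -> lim_left f a <= c.
Proof.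
move=> ub; apply: limr_le; first exact: cvg_at_left_homo.
by near=> x; apply: ub; near: x; exact: nbhs_left_lt.
Unshelve. all: by end_near. Qed.

Lemma le_lim_left x a : x < a -> f x <= lim_left f a.
Proof.
move=> xa; apply: limr_ge; first exact: cvg_at_left_homo.
by near=> y; apply/f_nd/ltW; near: y; exact: nbhs_left_gt.
Unshelve. all: by end_near. Qed.

Lemma lim_left_le a : lim_left f a <= f a.
Proof.
apply: limr_le; first exact: cvg_at_left_homo.
by near=> y; apply: f_nd; near: y; exact: nbhs_left_le.
Unshelve. all: by end_near. Qed.

Lemma lb_le_lim_right a c : (forall x, a < x -> c <= f x) -> c <= lim_right f a.
Proof.
move=> lb; apply: limr_ge; first exact: cvg_at_right_homo.
by near=> x; apply: lb; near: x; exact: nbhs_right_gt.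
Unshelve. all: by end_near. Qed.

Lemma lim_right_le a x : a < x -> lim_right f a <= f x.
Proof.
move=> ax; apply: limr_le; first exact: cvg_at_right_homo.
by near=> y; apply/f_nd/ltW; near: y; exact: nbhs_right_lt.
Unshelve. all: by end_near. Qed.

Lemma le_lim_right a : f a <= lim_right f a.
Proof.
apply: limr_ge; first exact: cvg_at_right_homo.
by near=> y; apply: f_nd; near: y; exact: nbhs_right_ge.
Unshelve. all: by end_near. Qed.

Lemma lim_right_le_lim_left y z : y < z -> lim_right f y <= lim_left f z.
Proof.
move=> yz; apply: (@le_trans _ _ (f ((y + z) / 2))).
  by apply: lim_right_le; rewrite midf_lt.
by apply: le_lim_left; rewrite midf_lt.
Qed.

Lemma nondecreasing_level_crossing w x M : f x < w -> w <= f M ->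
  exists y, lim_left f y <= w <= lim_right f y.
Proof.
move=> fxw wfM; pose S := [set y | f y < w].
have ubS : ubound S M.
  by move=> s; rewrite /S /= leNgt => fsw; apply/negP => /ltW/f_nd; lra.
have supS : has_sup S by split; [exists x | exists M].
exists (sup S); apply/andP; split.
  apply: lim_left_le_ub => z zS.
  have [s fsw] : exists2 s, S s & sup S - (sup S - z) < s.
    by apply: sup_adherent supS; rewrite subr_gt0.
  by rewrite opprB addrC subrK => /ltW/f_nd; move: fsw; rewrite /S /=; lra.
apply: lb_le_lim_right => z Sz; rewrite leNgt; apply/negP => fzw.
by move: (sup_upper_bound supS fzw); rewrite leNgt Sz.
Qed.

End NondecreasingOneSidedLimits.

Section DistributionFunctions.
Variable R : realType.
Implicit Types F G : R -> R.

Lemma lim_left_le_pointwise F G a : {homo F : x y / x <= y} ->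
  {homo G : x y / x <= y} -> (forall x, F x <= G x) -> lim_left F a <= lim_left G a.
Proof.
move=> F_nd G_nd FG; apply: lim_left_le_ub => // x xa.
exact: le_trans (FG x) (le_lim_left G_nd xa).
Qed.

Lemma lim_right_le_pointwise F G a : {homo F : x y / x <= y} ->
  {homo G : x y / x <= y} -> (forall x, F x <= G x) -> lim_right F a <= lim_right G a.
Proof.
move=> F_nd G_nd FG; apply: lb_le_lim_right => // x ax.
exact: le_trans (lim_right_le F_nd ax) (FG x).
Qed.

Lemma distribution_lim_bounds F y : distribution_function F ->
  [/\ 0 <= lim_left F y, lim_left F y <= F y, F y <= lim_right F y
    & lim_right F y <= 1].
Proof.
case=> F_nd F01 _ _; split; [|exact: lim_left_le|exact: le_lim_right|].
- have /andP[F0 _] := F01 (y - 1).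
  by apply: le_trans F0 (le_lim_left F_nd _); rewrite gtrBl.
- have /andP[_ F1] := F01 (y + 1).
  by apply: le_trans (lim_right_le F_nd _) F1; rewrite ltrDl.
Qed.

Lemma distribution_level_crossing F w : distribution_function F ->
  0 < w -> w < 1 -> exists y, lim_left F y <= w <= lim_right F y.
Proof.
case=> F_nd _ F_ninfty F_pinfty w0 w1.
have [x Fxw] := filter_ex (cvgr_lt _ F_ninfty _ w0).
have [M wFM] := filter_ex (cvgr_gt _ F_pinfty _ w1).
exact: (nondecreasing_level_crossing F_nd Fxw (ltW wFM)).
Qed.

Lemma Kfun_distribution F G : distribution_function F ->
  distribution_function G -> distribution_function (Kfun F G).
Proof.
case=> F_nd F01 F_ninfty F_pinfty [G_nd G01 G_ninfty G_pinfty]; split.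
- move=> x y xy; have := F_nd _ _ xy; have := G_nd _ _ xy; rewrite /Kfun.
  have /andP[? ?] := F01 x; have /andP[? ?] := F01 y.
  have /andP[? ?] := G01 x; have /andP[? ?] := G01 y; nra.
- move=> x; have /andP[? ?] := F01 x; have /andP[? ?] := G01 x.
  rewrite /Kfun; apply/andP; split; nra.
- have -> : 0 = 0 + 0 - 0 * 0 :> R by ring.
  by apply: cvgB; [apply: cvgD|apply: cvgM].
- have -> : 1 = 1 + 1 - 1 * 1 :> R by ring.
  by apply: cvgB; [apply: cvgD|apply: cvgM].
Qed.

Lemma lim_left_Kfun F G y : {homo F : x y / x <= y} -> {homo G : x y / x <= y} ->
  lim_left (Kfun F G) y = Kfun (lim_left F) (lim_left G) y.
Proof.
move=> F_nd G_nd; apply: cvg_lim => //.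
by apply: cvgB; [apply: cvgD|apply: cvgM]; exact: cvg_at_left_homo.
Qed.

Lemma lim_right_Kfun F G y : {homo F : x y / x <= y} -> {homo G : x y / x <= y} ->
  lim_right (Kfun F G) y = Kfun (lim_right F) (lim_right G) y.
Proof.
move=> F_nd G_nd; apply: cvg_lim => //.
by apply: cvgB; [apply: cvgD|apply: cvgM]; exact: cvg_at_right_homo.
Qed.

End DistributionFunctions.

Section MaxminPiece.
Variable R : realFieldType.
Implicit Types a b c h w : R.

Definition maxmin_piece a b c w :=
  if w <= a + c - a * c then a
  else if w <= b + c - b * c then (w - c) / (1 - c) else b.

Lemma lt1_of_mixture_gap a b c w : c <= 1 ->
  a + c - a * c < w -> w <= b + c - b * c -> c < 1.
Proof.
rewrite le_eqVlt => /predU1P[-> lo hi|//].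
by move: lo hi; rewrite !mulr1; lra.
Qed.

Lemma maxmin_piece_bounds a b c w : a <= b -> c <= 1 ->
  a <= maxmin_piece a b c w <= b.
Proof.
move=> ab c1; rewrite /maxmin_piece; case: ifPn => [_|]; first by rewrite lexx ab.
rewrite -ltNge => lo; case: ifPn => hi; last by rewrite ab lexx.
have c_lt1 := lt1_of_mixture_gap c1 lo hi.
have : (w - c) / (1 - c) * (1 - c) = w - c by rewrite divfK //; lra.
set t := (w - c) / (1 - c) => tE; apply/andP; split; nra.
Qed.

Lemma complement_factor_between a lo hi w : a < 1 ->
  a + lo - a * lo <= w -> w <= a + hi - a * hi ->
  exists h, [/\ lo <= h, h <= hi & 1 - w = (1 - a) * (1 - h)].
Proof.
move=> a_lt1 lo_w w_hi; exists (1 - (1 - w) / (1 - a)).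
have : (1 - w) / (1 - a) * (1 - a) = 1 - w by rewrite divfK //; lra.
set u := (1 - w) / (1 - a) => uE; split; nra.
Qed.

Lemma maxmin_piece_factor a b c hm hp w : a <= 1 -> b <= 1 ->
  hm <= c -> c <= hp -> hp <= 1 -> w < 1 ->
  a + hm - a * hm <= w -> w <= b + hp - b * hp ->
  exists h, [/\ hm <= h, h <= hp & 1 - w = (1 - maxmin_piece a b c w) * (1 - h)].
Proof.
move=> a1 b1 hm_c c_hp hp1 w1 lo hi; rewrite /maxmin_piece.
case: ifPn => [w_ac|]; last rewrite -ltNge => ac_w.
  have a_lt1 : a < 1 by rewrite lt_neqAle a1 andbT; apply: contraTneq lo => ->; lra.
  have [h [? h_c ?]] := complement_factor_between a_lt1 lo w_ac.
  by exists h; split => //; apply: le_trans c_hp.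
case: ifPn => [w_bc|]; last rewrite -ltNge => bc_w.
  have c_lt1 := lt1_of_mixture_gap (le_trans c_hp hp1) ac_w w_bc.
  have : (w - c) / (1 - c) * (1 - c) = w - c by rewrite divfK //; lra.
  by exists c; split => //; lra.
have b_lt1 : b < 1 by rewrite lt_neqAle b1 andbT; apply: contraTneq bc_w => ->; lra.
have [h [c_h ? ?]] := complement_factor_between b_lt1 (ltW bc_w) hi.
by exists h; split => //; apply: le_trans c_h.
Qed.

Lemma maxmin_piece_homo a b a' b' c w : a' <= a -> b' <= b -> a' <= b' -> a <= b ->
  c <= 1 -> w <= 1 -> maxmin_piece a' b' c w <= maxmin_piece a b c w.
Proof.
move=> aa bb ab' ab; rewrite le_eqVlt => /predU1P[-> w1|c_lt1 _].
  have mix1 x : x + 1 - x * 1 = 1 :> R by ring.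
  by rewrite /maxmin_piece !mix1 w1.
have : (w - c) / (1 - c) * (1 - c) = w - c by rewrite divfK //; lra.
rewrite /maxmin_piece; set t := (w - c) / (1 - c) => tE.
by case: (leP w (a' + c - a' * c)); case: (leP w (b' + c - b' * c));
  case: (leP w (a + c - a * c)); case: (leP w (b + c - b * c)); nra.
Qed.

Lemma le_of_one_sub_mul_eq g g' h h' w : w < 1 -> g <= 1 -> h <= h' -> h' <= 1 ->
  1 - w = (1 - g) * (1 - h) -> 1 - w = (1 - g') * (1 - h') -> g' <= g.
Proof.
move=> w1 g1 hh' h'1 wE wE'.
have h'_lt1 : h' < 1.
  rewrite lt_neqAle h'1 andbT; apply/eqP => h'E.
  by move: wE'; rewrite h'E subrr mulr0; lra.
rewrite leNgt; apply/negP => gg'.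
have : 0 <= (1 - g) * (h' - h) by apply: mulr_ge0; lra.
have : 0 < (g' - g) * (1 - h') by apply: mulr_gt0; lra.
have : (1 - g) * (1 - h) - (1 - g') * (1 - h') = (1 - g) * (h' - h) + (g' - g) * (1 - h')
  by ring.
lra.
Qed.

End MaxminPiece.

Definition maxmin_at (R : realType) (FY FZ : R -> R) (y w : R) : R :=
  maxmin_piece (lim_left FY y) (lim_right FY y) (FZ y) w.

Section MaxminAt.
Variables (R : realType) (FY FZ : R -> R).
Hypotheses (dY : distribution_function FY) (dZ : distribution_function FZ).

Lemma maxmin_genE w : 0 < w -> w < 1 ->
  exists2 y, lim_left (Kfun FY FZ) y <= w <= lim_right (Kfun FY FZ) y
           & maxmin_gen FY FZ w = maxmin_at FY FZ y w.
Proof.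
move=> w0 w1; rewrite /maxmin_gen gt_eqF // lt_eqF //=; set y := get _.
exists y => //.
exact: (getPex (distribution_level_crossing (Kfun_distribution dY dZ) w0 w1)).
Qed.

Lemma maxmin_at_bounds y w :
  lim_left FY y <= maxmin_at FY FZ y w <= lim_right FY y.
Proof.
have [_ YlY YYr _] := distribution_lim_bounds y dY.
have [_ _ ZZr Zr1] := distribution_lim_bounds y dZ.
exact: maxmin_piece_bounds (le_trans YlY YYr) (le_trans ZZr Zr1).
Qed.

Lemma maxmin_at_factor y w : w < 1 ->
  lim_left (Kfun FY FZ) y <= w <= lim_right (Kfun FY FZ) y ->
  exists h, [/\ lim_left FZ y <= h, h <= lim_right FZ y
              & 1 - w = (1 - maxmin_at FY FZ y w) * (1 - h)].
Proof.
have [Y_nd _ _ _] := dY; have [Z_nd _ _ _] := dZ.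
rewrite lim_left_Kfun // lim_right_Kfun // => w1 /andP[lo hi].
have [_ YlY YYr Yr1] := distribution_lim_bounds y dY.
have [_ ZlZ ZZr Zr1] := distribution_lim_bounds y dZ.
exact: maxmin_piece_factor (le_trans YlY (le_trans YYr Yr1)) Yr1 ZlZ ZZr Zr1 w1 lo hi.
Qed.

End MaxminAt.

Section MaxminAtComparison.
Variables (R : realType) (FY' FY FZ : R -> R).
Hypotheses (dY' : distribution_function FY') (dY : distribution_function FY)
  (dZ : distribution_function FZ) (le_FY' : forall y, FY' y <= FY y).

Lemma maxmin_at_le_of_lt y' y w : y' < y ->
  maxmin_at FY' FZ y' w <= maxmin_at FY FZ y w.
Proof.
have [Y'_nd _ _ _] := dY'; have [Y_nd _ _ _] := dY.
move=> y'y; have /andP[_ le_r'] := maxmin_at_bounds dY' dZ y' w.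
have /andP[le_l _] := maxmin_at_bounds dY dZ y w.
apply: le_trans le_r' (le_trans _ le_l).
exact: le_trans (lim_right_le_pointwise _ Y'_nd Y_nd le_FY') (lim_right_le_lim_left Y_nd y'y).
Qed.

Lemma maxmin_at_le_of_gt y' y w : y < y' -> w < 1 ->
  lim_left (Kfun FY' FZ) y' <= w <= lim_right (Kfun FY' FZ) y' ->
  lim_left (Kfun FY FZ) y <= w <= lim_right (Kfun FY FZ) y ->
  maxmin_at FY' FZ y' w <= maxmin_at FY FZ y w.
Proof.
move=> yy' w1 Ky' Ky; have [Z_nd _ _ _] := dZ.
have [h' [h'_l h'_r wE']] := maxmin_at_factor dY' dZ w1 Ky'.
have [h [_ h_r wE]] := maxmin_at_factor dY dZ w1 Ky.
have /andP[_ le_r] := maxmin_at_bounds dY dZ y w.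
have [_ _ _ Yr1] := distribution_lim_bounds y dY.
have [_ _ _ Zr1] := distribution_lim_bounds y' dZ.
apply: le_of_one_sub_mul_eq w1 (le_trans le_r Yr1) _ (le_trans h'_r Zr1) wE wE'.
exact: le_trans h_r (le_trans (lim_right_le_lim_left Z_nd yy') h'_l).
Qed.

Lemma maxmin_at_le y w : w <= 1 -> maxmin_at FY' FZ y w <= maxmin_at FY FZ y w.
Proof.
have [Y'_nd _ _ _] := dY'; have [Y_nd _ _ _] := dY.
have [_ Y'lY' Y'Y'r _] := distribution_lim_bounds y dY'.
have [_ YlY YYr _] := distribution_lim_bounds y dY.
have [_ _ ZZr Zr1] := distribution_lim_bounds y dZ.
apply: maxmin_piece_homo (le_trans Y'lY' Y'Y'r) (le_trans YlY YYr) (le_trans ZZr Zr1).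
- exact: lim_left_le_pointwise.
- exact: lim_right_le_pointwise.
Qed.

End MaxminAtComparison.

Theorem lemma2 (R : realType) (FY' FY FZ : R -> R) :
  distribution_function FY' -> distribution_function FY ->
  distribution_function FZ ->
  (forall y, FY' y <= FY y) ->
  forall w : R, 0 <= w <= 1 -> maxmin_gen FY' FZ w <= maxmin_gen FY FZ w.
Proof.
move=> dY' dY dZ le_FY' w /andP[w0 w1].
have [->|w_neq0] := eqVneq w 0; first by rewrite /maxmin_gen eqxx.
have [->|w_neq1] := eqVneq w 1; first by rewrite /maxmin_gen oner_eq0 eqxx.
have w_gt0 : 0 < w by rewrite lt_neqAle eq_sym w_neq0.
have w_lt1 : w < 1 by rewrite lt_neqAle w_neq1.
have [y' Ky' ->] := maxmin_genE dY' dZ w_gt0 w_lt1.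
have [y Ky ->] := maxmin_genE dY dZ w_gt0 w_lt1.
case: (ltgtP y' y) => [y'y | yy' | <-].
- exact: maxmin_at_le_of_lt.
- exact: maxmin_at_le_of_gt.
- exact: maxmin_at_le.
Qed.
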